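(* The following are equivalent: (i) $\sup_{d\in\mathbb N} n^{X_d}(\varepsilon)<\infty$ for every $\varepsilon\in(0,1)$; (ii) $\displaystyle\lim_{t\to0}\ \sup_{d\in\mathbb N}\sum_{k=1}^\infty \bar\lambda^{X_d}_k\,\mathbf 1\bigl(\bar\lambda^{X_d}_k<t\bigr)=0$.
   Context: For each $d\in\mathbb N$, $X_d$ is a random element of a separable Hilbert space $H_d$ with $\mathbb E X_d=0$ and $\mathbb E\|X_d\|_{H_d}^2<\infty$. For a centered Hilbert-space random element $Z$ with finite second moment, $\lambda^Z_1\ge\lambda^Z_2\ge\dots\ge 0$ denote the eigenvalues of its covariance operator $K^Z$ listed with multiplicity (padded with zeros if there are finitely many), $\Lambda^Z=\sum_k\lambda^Z_k=\mathbb E\|Z\|^2$, and $\bar\lambda^Z_k=\lambda^Z_k/\Lambda^Z$. It is assumed that $\lambda^{X_d}_1>0$ for all $d$. The average case approximation complexity is $n^{X_d}(\varepsilon)=\min\{n\in\mathbb N: e^{X_d}(n)\le \varepsilon\, e^{X_d}(0)\}$ for $\varepsilon\in(0,1)$, where $e^{X_d}(0)=(\mathbb E\|X_d\|^2)^{1/2}$ and $e^{X_d}(n)$ is the infimum of $(\mathbb E\|X_d-\sum_{m=1}^n l_m(X_d)\psi_m\|^2)^{1/2}$ over all $\psi_m\in H_d$, $l_m\in H_d^*$; equivalently $n^{X_d}(\varepsilon)=\min\{n\in\mathbb N:\ \sum_{k>n}\bar\lambda^{X_d}_k\le\varepsilon^2\}$. $\mathbf 1(A)$ is the indicator of the proposition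 $A$. *)

From Stdlib Require Import Reals Lra ClassicalEpsilon.
Open Scope R_scope.

(* The value of a convergent series sum_{k>=0} f k (chosen via epsilon;
   meaningful when the series converges, which is always assumed). *)
Definition series_value (f : nat -> R) : R :=
  epsilon (inhabits 0) (fun l => infinite_sum f l).

(* lam d k = lambda^{X_d}_{k+1}  (0-based index k). *)
Definition Lam (lam : nat -> nat -> R) (d : nat) : R := series_value (lam d).

Definition barlam (lam : nat -> nat -> R) (d k : nat) : R := lam d k / Lam lam d.

(* tail d n = sum_{k > n} bar lambda^{X_d}_k  (1-based k), i.e. 0-based indices >= n *)
Definition tail (lam : nat -> nat -> R) (d n : nat) : R :=
  series_value (fun j => barlam lam d (n + j)).

Definition ncompl (lam : nat -> nat -> R) (d : nat) (eps : R) : nat :=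
  epsilon (inhabits 0%nat)
    (fun n => tail lam d n <= eps ^ 2 /\
              forall m, tail lam d m <= eps ^ 2 -> (n <= m)%nat).

Definition small_mass (lam : nat -> nat -> R) (d : nat) (t : R) : R :=
  series_value (fun k => if Rlt_dec (barlam lam d k) t then barlam lam d k else 0).

(* After normalisation the eigenvalues form a nonincreasing sequence of total
   mass 1, so the k-th one is at most 1/(k+1).  Hence every weight of index at
   least M is below t as soon as M t > 1, and the tail of mass beyond M is
   dominated by the mass of the weights below t.  Conversely, the mass of the
   weights below t is at most n |t| (the first n of them) plus the tail beyond
   n. *)

From Stdlib Require Import Reals Lra Lia Wf_nat Classical ClassicalEpsilon.
From Coquelicot Require Import Coquelicot.
Open Scope R_scope.

Lemma series_value_Series (f : nat -> R) : ex_series f -> series_value f = Series f.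
Proof.
  intros Hf. unfold series_value.
  assert (Hl : exists l, infinite_sum f l).
  { exists (Series f). apply is_series_Reals, Series_correct, Hf. }
  pose proof (epsilon_spec (inhabits 0) (fun l => infinite_sum f l) Hl) as Heps.
  apply is_series_Reals in Heps. symmetry. now apply is_series_unique.
Qed.

Lemma Series_nonneg (a : nat -> R) : (forall n, 0 <= a n) -> ex_series a -> 0 <= Series a.
Proof.
  intros Ha Hex. rewrite <- (Rmult_0_r (Series a)), <- Series_scal_r.
  apply Series_le; [intros n; rewrite Rmult_0_r; split; [lra | auto] | exact Hex].
Qed.

Section NonincreasingWeights.
Variable a : nat -> R.
Hypothesis a_ge0 : forall k, 0 <= a k.
Hypothesis a_nonincr : forall k, a (S k) <= a k.
Hypothesis ex_series_a : ex_series a.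
Hypothesis Series_a : Series a = 1.

Definition tail_mass (n : nat) : R := Series (fun j => a (n + j)%nat).

Definition small_weights (t : R) (k : nat) : R := if Rlt_dec (a k) t then a k else 0.

Lemma ex_series_tail n : ex_series (fun j => a (n + j)%nat).
Proof. now apply ex_series_incr_n. Qed.

Lemma tail_mass_ge0 n : 0 <= tail_mass n.
Proof. apply Series_nonneg; [auto | apply ex_series_tail]. Qed.

Lemma tail_mass_S n : tail_mass (S n) = tail_mass n - a n.
Proof.
  unfold tail_mass. rewrite (Series_incr_1 (fun j => a (n + j)%nat)) by apply ex_series_tail.
  rewrite Nat.add_0_r, (Series_ext (fun k => a (n + S k)%nat) (fun j => a (S n + j)%nat)).
  - ring.
  - intros k. f_equal. lia.
Qed.

Lemma tail_mass_nonincr n m : (n <= m)%nat -> tail_mass m <= tail_mass n.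
Proof. induction 1; [lra | rewrite tail_mass_S; pose proof (a_ge0 m); lra]. Qed.

Lemma tail_mass_partial n : tail_mass (S n) = 1 - sum_f_R0 a n.
Proof.
  induction n as [|n IHn]; rewrite tail_mass_S; simpl.
  - unfold tail_mass. rewrite <- Series_a. apply Rminus_eq_compat_r, Series_ext.
    reflexivity.
  - rewrite IHn. ring.
Qed.

Lemma tail_mass_vanishes c : 0 < c -> exists n, tail_mass n <= c.
Proof.
  intros Hc. pose proof (Series_correct a ex_series_a) as Ha.
  rewrite Series_a in Ha. apply is_series_Reals in Ha.
  destruct (Ha c Hc) as [N HN]. exists (S N).
  rewrite tail_mass_partial. specialize (HN N (le_n N)).
  unfold R_dist in HN. apply Rabs_def2 in HN. lra.
Qed.

Lemma succ_mul_le_partial_sum k : INR (S k) * a k <= sum_f_R0 a k.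
Proof.
  induction k as [|k IHk]; [simpl; lra|].
  cbn [sum_f_R0]. rewrite S_INR. pose proof (a_nonincr k). pose proof (pos_INR (S k)).
  assert (INR (S k) * a (S k) <= INR (S k) * a k) by (apply Rmult_le_compat_l; lra).
  lra.
Qed.

Lemma weight_lt_of_index_ge t M k : 1 < INR M * t -> (M <= k)%nat -> a k < t.
Proof.
  intros HMt HMk.
  assert (Hk : INR (S k) * a k <= 1).
  { pose proof (succ_mul_le_partial_sum k). pose proof (tail_mass_partial k).
    pose proof (tail_mass_ge0 (S k)). lra. }
  assert (HM : INR M <= INR (S k)) by (apply le_INR; lia).
  destruct (Rlt_le_dec (a k) t) as [|Hle]; [assumption|].
  assert (INR M * t <= INR (S k) * a k); [|lra].
  apply Rle_trans with (INR (S k) * t).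
  - apply Rmult_le_compat_r; [pose proof (pos_INR M); nra | exact HM].
  - apply Rmult_le_compat_l; [apply pos_INR | exact Hle].
Qed.

Lemma small_weights_bounds t k : 0 <= small_weights t k <= a k.
Proof. unfold small_weights. destruct Rlt_dec; pose proof (a_ge0 k); lra. Qed.

Lemma small_weights_le_abs t k : small_weights t k <= Rabs t.
Proof.
  unfold small_weights. pose proof (Rle_abs t). pose proof (Rabs_pos t).
  destruct Rlt_dec; lra.
Qed.

Lemma ex_series_small_weights t : ex_series (small_weights t).
Proof.
  apply (ex_series_le (small_weights t) a); [|exact ex_series_a].
  intros n. change (norm (small_weights t n)) with (Rabs (small_weights t n)).
  destruct (small_weights_bounds t n). rewrite Rabs_right; lra.
Qed.

Lemma Series_small_weights_le n t :
  Series (small_weights t) <= INR (S n) * Rabs t + tail_mass (S n).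
Proof.
  rewrite (Series_incr_n (small_weights t) (S n)) by (lia || apply ex_series_small_weights).
  apply Rplus_le_compat.
  - simpl pred. induction n as [|n IHn]; simpl sum_f_R0.
    + pose proof (small_weights_le_abs t 0). simpl. lra.
    + rewrite S_INR. pose proof (small_weights_le_abs t (S n)). lra.
  - apply Series_le; [intros k; apply small_weights_bounds | apply ex_series_tail].
Qed.

Lemma tail_mass_le_Series_small_weights t M :
  1 < INR M * t -> tail_mass M <= Series (small_weights t).
Proof.
  intros HMt.
  assert (HM : (0 < M)%nat) by (destruct M; [simpl in HMt; lra | lia]).
  rewrite (Series_incr_n (small_weights t) M) by (assumption || apply ex_series_small_weights).
  assert (Htail : tail_mass M = Series (fun k => small_weights t (M + k)%nat)).
  { apply Series_ext. intros k. unfold small_weights.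
    destruct Rlt_dec as [|Hge]; [reflexivity|].
    exfalso. apply Hge, (weight_lt_of_index_ge t M); [assumption | lia]. }
  assert (0 <= sum_f_R0 (small_weights t) (pred M)).
  { apply cond_pos_sum. intros k. apply small_weights_bounds. }
  lra.
Qed.

End NonincreasingWeights.

Section Eigenvalues.
Variable lam : nat -> nat -> R.
Hypothesis Hnonneg : forall d k, 0 <= lam d k.
Hypothesis Hdecr : forall d k, lam d (S k) <= lam d k.
Hypothesis Hsum : forall d, exists L, infinite_sum (lam d) L.
Hypothesis Hpos : forall d, 0 < lam d 0%nat.

Lemma ex_series_lam d : ex_series (lam d).
Proof. destruct (Hsum d) as [L HL]. exists L. now apply is_series_Reals. Qed.

Lemma Lam_pos d : 0 < Lam lam d.
Proof.
  unfold Lam. rewrite series_value_Series, Series_incr_1 by apply ex_series_lam.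
  pose proof (Hpos d).
  assert (0 <= Series (fun k => lam d (S k))); [|lra].
  apply Series_nonneg; [auto | apply (ex_series_incr_1 (lam d)), ex_series_lam].
Qed.

Lemma barlam_ge0 d k : 0 <= barlam lam d k.
Proof.
  unfold barlam. apply Rmult_le_pos; [auto|].
  apply Rlt_le, Rinv_0_lt_compat, Lam_pos.
Qed.

Lemma barlam_nonincr d k : barlam lam d (S k) <= barlam lam d k.
Proof.
  apply Rmult_le_compat_r; [apply Rlt_le, Rinv_0_lt_compat, Lam_pos | auto].
Qed.

Lemma ex_series_barlam d : ex_series (barlam lam d).
Proof. apply ex_series_scal_r, ex_series_lam. Qed.

Lemma Series_barlam d : Series (barlam lam d) = 1.
Proof.
  unfold barlam, Rdiv. rewrite Series_scal_r.
  pose proof (Lam_pos d) as HL. unfold Lam in *.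
  rewrite series_value_Series in * by apply ex_series_lam. field. lra.
Qed.

Lemma tail_tail_mass d n : tail lam d n = tail_mass (barlam lam d) n.
Proof. apply series_value_Series, ex_series_tail, ex_series_barlam. Qed.

Lemma small_mass_Series d t : small_mass lam d t = Series (small_weights (barlam lam d) t).
Proof.
  apply series_value_Series, ex_series_small_weights;
    [apply barlam_ge0 | apply ex_series_barlam].
Qed.

Lemma ncompl_spec d eps : (exists n, tail lam d n <= eps ^ 2) ->
  tail lam d (ncompl lam d eps) <= eps ^ 2 /\
  forall m, tail lam d m <= eps ^ 2 -> (ncompl lam d eps <= m)%nat.
Proof.
  intros Hex.
  destruct (dec_inh_nat_subset_has_unique_least_element
              (fun n => tail lam d n <= eps ^ 2) (fun n => classic _) Hex)
    as [n [Hn _]].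
  unfold ncompl. apply (epsilon_spec (inhabits 0%nat)). exists n. exact Hn.
Qed.

Lemma tail_ncompl_le d eps : 0 < eps -> tail lam d (ncompl lam d eps) <= eps ^ 2.
Proof.
  intros Heps. apply ncompl_spec.
  destruct (tail_mass_vanishes (barlam lam d) (ex_series_barlam d) (Series_barlam d) (eps ^ 2)) as [n Hn]; [apply pow_lt, Heps|].
  exists n. now rewrite tail_tail_mass.
Qed.

Lemma ncompl_le d eps m : tail lam d m <= eps ^ 2 -> (ncompl lam d eps <= m)%nat.
Proof. intros Hm. apply (ncompl_spec d eps); [exists m|]; exact Hm. Qed.

Lemma small_mass_le d n t : small_mass lam d t <= INR (S n) * Rabs t + tail lam d (S n).
Proof.
  rewrite small_mass_Series, tail_tail_mass.
  apply Series_small_weights_le; [apply barlam_ge0 | apply ex_series_barlam].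
Qed.

Lemma tail_le_small_mass d t M : 1 < INR M * t -> tail lam d M <= small_mass lam d t.
Proof.
  intros HMt. rewrite small_mass_Series, tail_tail_mass.
  apply tail_mass_le_Series_small_weights; auto using barlam_ge0, barlam_nonincr,
    ex_series_barlam, Series_barlam.
Qed.

Lemma small_mass_uniformly_small :
  (forall eps, 0 < eps < 1 -> exists N : nat, forall d, (ncompl lam d eps <= N)%nat) ->
  forall e, 0 < e -> exists delta, 0 < delta /\
    forall t, 0 < Rabs t < delta -> forall d, small_mass lam d t <= e.
Proof.
  intros Hbound e He.
  set (eps := Rmin (e / 2) (1 / 2)).
  assert (Heps : 0 < eps <= e / 2 /\ eps <= 1 / 2).
  { unfold eps. repeat split; [apply Rmin_glb_lt | apply Rmin_l | apply Rmin_r]; lra. }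
  destruct (Hbound eps) as [N HN]; [lra|].
  assert (HSN : 0 < INR (S N)) by apply lt_0_INR, Nat.lt_0_succ.
  exists (e / (2 * INR (S N))). split; [apply Rdiv_lt_0_compat; lra|].
  intros t [_ Ht] d.
  assert (Hhead : INR (S N) * Rabs t <= e / 2).
  { apply Rmult_lt_compat_l with (r := INR (S N)) in Ht; [|exact HSN].
    replace (INR (S N) * (e / (2 * INR (S N)))) with (e / 2) in Ht by (field; lra). lra. }
  assert (Htail : tail lam d (S N) <= eps ^ 2).
  { rewrite !tail_tail_mass.
    apply Rle_trans with (tail_mass (barlam lam d) (ncompl lam d eps)).
    - apply (tail_mass_nonincr _ (barlam_ge0 d) (ex_series_barlam d)), le_S, HN.
    - rewrite <- tail_tail_mass. apply tail_ncompl_le. lra. }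
  assert (Hsq : eps ^ 2 <= eps) by (simpl; nra).
  pose proof (small_mass_le d N t). lra.
Qed.

Lemma ncompl_uniformly_bounded :
  (forall e, 0 < e -> exists delta, 0 < delta /\
    forall t, 0 < Rabs t < delta -> forall d, small_mass lam d t <= e) ->
  forall eps, 0 < eps < 1 -> exists N : nat, forall d, (ncompl lam d eps <= N)%nat.
Proof.
  intros Hsmall eps Heps.
  destruct (Hsmall (eps ^ 2)) as [delta [Hdelta Hd]]; [apply pow_lt; lra|].
  destruct (INR_unbounded (2 / delta)) as [M HM].
  exists M. intros d. apply ncompl_le.
  apply Rle_trans with (small_mass lam d (delta / 2)).
  - apply tail_le_small_mass.
    apply Rmult_gt_compat_r with (r := delta / 2) in HM; [|lra].
    replace (2 / delta * (delta / 2)) with 1 in HM by (field; lra). lra.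
  - apply Hd. rewrite Rabs_right; lra.
Qed.

End Eigenvalues.

Theorem proposition3 (lam : nat -> nat -> R)
  (Hnonneg : forall d k, 0 <= lam d k)
  (Hdecr : forall d k, lam d (S k) <= lam d k)
  (Hsum : forall d, exists L, infinite_sum (lam d) L)
  (Hpos : forall d, 0 < lam d 0%nat) :
  (forall eps, 0 < eps < 1 -> exists N : nat, forall d, (ncompl lam d eps <= N)%nat)
  <->
  (forall e, 0 < e -> exists delta, 0 < delta /\
     forall t, 0 < Rabs t < delta -> forall d, small_mass lam d t <= e).
Proof.
  split.
  - exact (small_mass_uniformly_small lam Hnonneg Hsum Hpos).
  - exact (ncompl_uniformly_bounded lam Hnonneg Hdecr Hsum Hpos).
Qed.
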